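(* Let $a,b,c$ be the vertices of a nondegenerate triangle in $\mathbb{R}^2$, and let $d$ be a point of the closed triangle $\triangle abc$ not lying on the line $ab$. Let $e$ and $f$ be the intersections of the line through $d$ parallel to $ab$ with the segments $ac$ and $bc$ respectively. Then the area of the triangle $\triangle abd$ (the discarded region) is larger than the area of $\triangle ade \cup \triangle bdf$ (the preserved region).
   Context: This describes one step of QuickHull on a planar set: $ab$ is an edge of the current partial hull, $c$ is the intersection of the lines through $a$ and $b$ beyond which no input point lies (so remaining candidate points lie in $\triangle abc$), $d$ is the point farthest from line $ab$ on the outer side, which is inserted into the partial hull; points in $\triangle abd$ are then discarded, while the points in $\triangle ade$ and $\triangle bdf$ are preserved for later steps. *)

From mathcomp Require Import all_boot all_order all_algebra.
Set Implicit Arguments. Unset Strict Implicit. Unset Printing Implicit Defensive.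
Import Order.TTheory GRing.Theory Num.Theory.
Local Open Scope ring_scope.

Definition point (R : realFieldType) := (R * R)%type.

Definition orient (R : realFieldType) (p q r : point R) : R :=
  (q.1 - p.1) * (r.2 - p.2) - (q.2 - p.2) * (r.1 - p.1).

Definition tri_area (R : realFieldType) (p q r : point R) : R :=
  `|orient p q r| / 2.

Definition nondeg_triangle (R : realFieldType) (p q r : point R) : Prop :=
  orient p q r != 0.

Definition on_line (R : realFieldType) (p q x : point R) : Prop :=
  orient p q x = 0.

Definition in_closed_triangle (R : realFieldType) (p q r x : point R) : Prop :=
  exists l1 l2 l3 : R, [/\ 0 <= l1, 0 <= l2, 0 <= l3, l1 + l2 + l3 = 1 &
    x = (l1 * p.1 + l2 * q.1 + l3 * r.1, l1 * p.2 + l2 * q.2 + l3 * r.2)].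

Definition on_segment (R : realFieldType) (p q x : point R) : Prop :=
  exists t : R, [/\ 0 <= t, t <= 1 &
    x = (p.1 + t * (q.1 - p.1), p.2 + t * (q.2 - p.2))].

Definition on_parallel (R : realFieldType) (p q d x : point R) : Prop :=
  (q.1 - p.1) * (x.2 - d.2) - (q.2 - p.2) * (x.1 - d.1) = 0.

From mathcomp Require Import all_boot all_order all_algebra.
From mathcomp Require Import ring lra.
Import Order.TTheory GRing.Theory Num.Theory.
Local Open Scope ring_scope.

(* Write d = l1 a + l2 b + l3 c in barycentric coordinates and D = orient a b c.
   The signed area of abd is l3 D, so l3 > 0 as d is off the line ab, and the
   parallel to ab through d meets ac and bc at parameter l3.  Then ade and bdf
   have signed areas l2 l3 D and -l1 l3 D, so the preserved area is
   l1 + l2 = 1 - l3 times the discarded one. *)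

Section QuickHullStep.

Context {R : realFieldType}.
Implicit Types (p q r x y : point R) (t : R).

(* [bary] and [lerp] are literally the coordinates in [in_closed_triangle] and
   [on_segment], so those hypotheses feed the lemmas below by conversion. *)
Definition bary (l1 l2 l3 : R) p q r : point R :=
  (l1 * p.1 + l2 * q.1 + l3 * r.1, l1 * p.2 + l2 * q.2 + l3 * r.2).

Definition lerp p q t : point R :=
  (p.1 + t * (q.1 - p.1), p.2 + t * (q.2 - p.2)).

Lemma on_line_l p q : on_line p q p.
Proof. by rewrite /on_line /orient; ring. Qed.

Lemma on_line_r p q : on_line p q q.
Proof. by rewrite /on_line /orient; ring. Qed.

Lemma on_parallelE p q d x : on_parallel p q d x <-> orient p q x = orient p q d.
Proof.
have -> : on_parallel p q d x <-> orient p q x - orient p q d = 0.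
  by rewrite /on_parallel /orient; split => <-; ring.
by split => [/subr0_eq | ->]; last exact: subrr.
Qed.

Lemma orient_bary p q r (l1 l2 l3 : R) : l1 + l2 + l3 = 1 ->
  orient p q (bary l1 l2 l3 p q r) = l3 * orient p q r.
Proof.
move=> hs; have -> : l1 = 1 - l2 - l3 by lra.
by rewrite /orient /=; ring.
Qed.

Lemma orient_lerp p q x y t :
  orient p q (lerp x y t) = (1 - t) * orient p q x + t * orient p q y.
Proof. by rewrite /orient /=; ring. Qed.

Lemma parallel_lerp_param {p q r d x t} : on_line p q x ->
  on_parallel p q d (lerp x r t) -> t * orient p q r = orient p q d.
Proof.
by rewrite /on_line => hx /on_parallelE; rewrite orient_lerp hx => <-; ring.
Qed.

Lemma orient_bary_lerp_l p q r (l1 l2 l3 : R) : l1 + l2 + l3 = 1 ->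
  orient p (bary l1 l2 l3 p q r) (lerp p r l3) = l2 * l3 * orient p q r.
Proof.
move=> hs; have -> : l1 = 1 - l2 - l3 by lra.
by rewrite /orient /=; ring.
Qed.

Lemma orient_bary_lerp_r p q r (l1 l2 l3 : R) : l1 + l2 + l3 = 1 ->
  orient q (bary l1 l2 l3 p q r) (lerp q r l3) = - (l1 * l3 * orient p q r).
Proof.
move=> hs; have -> : l1 = 1 - l2 - l3 by lra.
by rewrite /orient /=; ring.
Qed.

Lemma parallel_bary_lerp_param {p q r x} {l1 l2 l3 : R} {t} :
  nondeg_triangle p q r -> l1 + l2 + l3 = 1 -> on_line p q x ->
  on_parallel p q (bary l1 l2 l3 p q r) (lerp x r t) -> t = l3.
Proof.
move=> hD hs hx /(parallel_lerp_param hx).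
by rewrite orient_bary // => /(mulIf hD).
Qed.

Lemma tri_area_bary_lerp p q r (l1 l2 l3 : R) :
  0 <= l1 -> 0 <= l2 -> 0 <= l3 -> l1 + l2 + l3 = 1 ->
  tri_area p (bary l1 l2 l3 p q r) (lerp p r l3)
    + tri_area q (bary l1 l2 l3 p q r) (lerp q r l3)
  = (1 - l3) * tri_area p q (bary l1 l2 l3 p q r).
Proof.
move=> h1 h2 h3 hs; rewrite /tri_area orient_bary_lerp_l // orient_bary_lerp_r //.
rewrite orient_bary // normrN !normrM (ger0_norm h1) (ger0_norm h2) (ger0_norm h3).
have -> : l1 = 1 - l2 - l3 by lra.
by ring.
Qed.

End QuickHullStep.

Theorem lemma1 (R : realFieldType) (a b c d e f : point R) :
  nondeg_triangle a b c ->
  in_closed_triangle a b c d ->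
  ~ on_line a b d ->
  on_segment a c e -> on_parallel a b d e ->
  on_segment b c f -> on_parallel a b d f ->
  tri_area a d e + tri_area b d f < tri_area a b d.
Proof.
move=> hD [l1 [l2 [l3 [h1 h2 h3 hs ->]]]] hd [t [_ _ ->]] he [s [_ _ ->]] hf.
rewrite (parallel_bary_lerp_param hD hs (on_line_l a b) he).
rewrite (parallel_bary_lerp_param hD hs (on_line_r a b) hf).
have l3_gt0 : 0 < l3.
  rewrite lt0r h3 andbT; apply: contra_notN hd => /eqP l3_0.
  by rewrite /on_line orient_bary // l3_0 mul0r.
rewrite tri_area_bary_lerp // gtr_pMl ?gtrBl //.
by rewrite /tri_area divr_gt0 // normr_gt0 orient_bary // (mulf_neq0 (lt0r_neq0 l3_gt0) hD).
Qed.
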